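(* Let $\alpha'>0$, $\nu':=\nu(\alpha')$, $T:=T(\alpha')$, let $\delta\in(0,1)$ and $0<\Delta\le(1-\delta)/\nu'$. Then for all integers $t,m$ and reals $x$ with $T\le x\le m<t$: $$e^{\nu'm}+\tfrac{t-m}{\alpha'}e^{\nu'(m-T)}\le e^{\nu't},$$ $$e^{\nu'm}-e^{\nu'(x-\Delta)}+\delta\,\tfrac{t-m}{\alpha'}e^{\nu'x}\le e^{\nu't}.$$
   Context: For $\alpha>0$, let $T=T(\alpha)\in\mathbb N$ be the unique positive integer with $\frac{(T-1)^T}{T^{T-1}}<\alpha\le\frac{T^{T+1}}{(T+1)^T}$, and define $\nu(\alpha):=\frac1T\log\frac T\alpha$. (In the paper this is applied with $\alpha'=\alpha/(1+3\epsilon)$, $\delta=(1+2\epsilon)/(1+3\epsilon)$, $\Delta\le\epsilon/(\nu'(1+3\epsilon))$.) *)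

From Stdlib Require Import Reals Lra Lia.
Open Scope R_scope.

(* T(alpha) is the unique positive integer T with
   (T-1)^T / T^(T-1) < alpha <= T^(T+1) / (T+1)^T. *)
Definition is_T (alpha : R) (T : nat) : Prop :=
  (1 <= T)%nat /\
  (INR T - 1) ^ T / INR T ^ (T - 1) < alpha /\
  alpha <= INR T ^ (T + 1) / (INR T + 1) ^ T.

Definition nu_of (alpha : R) (T : nat) : R := / INR T * ln (INR T / alpha).

(* Write E = exp nu, so that E ^ T = T / alpha.  The two bounds defining T(alpha)
   say exactly (T - 1) E < T <= T E - 1: the sequence k / E ^ k increases up to
   k = T and decreases afterwards, hence k <= alpha E ^ k for every k.  With
   k = t - m, the first inequality reduces to Bernoulli's inequality
   1 + k / T <= (1 + 1 / T) ^ k <= E ^ k.  For the second, exp (- nu Delta) >=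
   1 - nu Delta >= delta and x <= m reduce it to
   1 + delta (k / alpha - 1) <= max 1 (k / alpha) <= E ^ k. *)

From Stdlib Require Import Reals ZArith Lra Lia.
Open Scope R_scope.

Lemma exp_mult_INR (n : nat) (x : R) : exp (INR n * x) = exp x ^ n.
Proof.
  rewrite <- Rpower_pow by apply exp_pos.
  unfold Rpower; rewrite ln_exp; reflexivity.
Qed.

Lemma pow_lt_compat_l (x y : R) (n : nat) :
  0 <= x < y -> (0 < n)%nat -> x ^ n < y ^ n.
Proof.
  intros [Hx Hxy] Hn; destruct n as [|n]; [lia|clear Hn].
  induction n as [|n IH]; [simpl; lra|].
  change (x * x ^ S n < y * y ^ S n).
  assert (0 <= x ^ S n) by (apply pow_le; lra).
  nra.
Qed.

Section PowPeak.
Variables (E : R) (T : nat).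
Hypotheses (HupE : INR T + 1 <= INR T * E) (HdownE : (INR T - 1) * E <= INR T).

Let HTpos : 0 < INR T.
Proof. destruct T as [|n]; [simpl in HupE; lra | apply lt_0_INR; lia]. Qed.

Let HE : 1 < E.
Proof. nra. Qed.

Lemma INR_mul_pow_le_peak_above (j : nat) :
  INR (T + j) * E ^ T <= INR T * E ^ (T + j).
Proof.
  induction j as [|j IH]; [rewrite Nat.add_0_r; lra|].
  rewrite Nat.add_succ_r, S_INR, <- tech_pow_Rmult.
  assert (Hstep : INR (T + j) + 1 <= INR (T + j) * E).
  { rewrite plus_INR. assert (0 <= INR j) by apply pos_INR. nra. }
  assert (0 < E ^ T) by (apply pow_lt; lra).
  nra.
Qed.

Lemma INR_mul_pow_le_peak_below (j k : nat) :
  (k + j = T)%nat -> INR k * E ^ T <= INR T * E ^ k.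
Proof.
  revert k; induction j as [|j IH]; intros k Hkj.
  - rewrite Nat.add_0_r in Hkj; subst k; lra.
  - specialize (IH (S k) ltac:(lia)).
    rewrite S_INR, <- tech_pow_Rmult in IH.
    assert (Hstep : INR k * E <= INR k + 1).
    { assert (INR k + 1 <= INR T) by (rewrite <- S_INR; apply le_INR; lia).
      assert (0 <= INR k) by apply pos_INR. nra. }
    assert (0 < E ^ T) by (apply pow_lt; lra).
    assert (0 < E ^ k) by (apply pow_lt; lra).
    nra.
Qed.

Lemma INR_mul_pow_le_peak (k : nat) : INR k * E ^ T <= INR T * E ^ k.
Proof.
  destruct (Nat.le_gt_cases T k) as [HTk | HkT].
  - replace k with (T + (k - T))%nat by lia.
    apply INR_mul_pow_le_peak_above.
  - apply (INR_mul_pow_le_peak_below (T - k)); lia.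
Qed.

End PowPeak.

Lemma sub_add_le_mul (q p e r d F : R) :
  0 <= p <= q -> 0 <= d <= e -> d < 1 -> 1 <= F -> r <= F ->
  q - p * e + d * r * p <= q * F.
Proof.
  intros [Hp Hpq] [Hd Hde] Hd1 HF HrF.
  assert (Hstep : q - p * e + d * r * p <= q + d * p * (r - 1)) by nra.
  destruct (Rle_lt_dec r 1) as [Hr1|Hr1].
  - assert (d * p * (r - 1) <= 0) by (assert (0 <= d * p) by nra; nra).
    nra.
  - assert (d * p * (r - 1) <= d * q * (r - 1)) by (apply Rmult_le_compat_r; nra).
    assert (0 <= q * ((1 - d) * (r - 1))) by (apply Rmult_le_pos; nra).
    nra.
Qed.

Section TOfAlpha.
Variables (alpha : R) (T : nat).
Hypotheses (Halpha : 0 < alpha) (HT : is_T alpha T).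
Local Notation nu := (nu_of alpha T).

Lemma INR_T_ge_1 : 1 <= INR T.
Proof. destruct HT as [HT1 _]; apply (le_INR 1); exact HT1. Qed.

Lemma exp_nu_pow_T : exp nu ^ T = INR T / alpha.
Proof.
  pose proof INR_T_ge_1.
  rewrite <- exp_mult_INR; unfold nu_of.
  replace (INR T * (/ INR T * ln (INR T / alpha))) with (ln (INR T / alpha))
    by (field; lra).
  apply exp_ln, Rdiv_lt_0_compat; lra.
Qed.

Lemma exp_nu_lower : INR T + 1 <= INR T * exp nu.
Proof.
  destruct HT as [HT1 [_ Hup]]; pose proof INR_T_ge_1.
  apply Rnot_lt_le; intro Hlt.
  assert (HP : 0 < (INR T + 1) ^ T) by (apply pow_lt; lra).
  assert (Hpow : (INR T * exp nu) ^ T < (INR T + 1) ^ T).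
  { apply pow_lt_compat_l; [|lia].
    split; [apply Rmult_le_pos; [lra | apply Rlt_le, exp_pos] | exact Hlt]. }
  rewrite Rpow_mult_distr, exp_nu_pow_T in Hpow.
  rewrite Nat.add_1_r, <- tech_pow_Rmult in Hup.
  apply (Rmult_le_compat_r ((INR T + 1) ^ T)) in Hup; [|lra].
  replace (INR T * INR T ^ T / (INR T + 1) ^ T * (INR T + 1) ^ T)
    with (INR T * INR T ^ T) in Hup by (field; lra).
  apply (Rmult_lt_compat_r alpha) in Hpow; [|lra].
  replace (INR T ^ T * (INR T / alpha) * alpha) with (INR T * INR T ^ T) in Hpow
    by (field; lra).
  lra.
Qed.

Lemma exp_nu_upper : (INR T - 1) * exp nu < INR T.
Proof.
  destruct HT as [HT1 [Hlo _]]; pose proof INR_T_ge_1.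
  apply Rnot_le_lt; intro Hge.
  assert (HQ : 0 < INR T ^ (T - 1)) by (apply pow_lt; lra).
  assert (HTT : INR T ^ T = INR T * INR T ^ (T - 1))
    by (rewrite tech_pow_Rmult; f_equal; lia).
  assert (Hpow : INR T ^ T <= ((INR T - 1) * exp nu) ^ T) by (apply pow_incr; lra).
  rewrite Rpow_mult_distr, exp_nu_pow_T in Hpow.
  apply (Rmult_lt_compat_r (INR T ^ (T - 1))) in Hlo; [|lra].
  replace ((INR T - 1) ^ T / INR T ^ (T - 1) * INR T ^ (T - 1))
    with ((INR T - 1) ^ T) in Hlo by (field; lra).
  apply (Rmult_le_compat_r alpha) in Hpow; [|lra].
  replace ((INR T - 1) ^ T * (INR T / alpha) * alpha) with (INR T * (INR T - 1) ^ T)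
    in Hpow by (field; lra).
  nra.
Qed.

Lemma nu_pos : 0 < nu.
Proof.
  pose proof exp_nu_lower; pose proof INR_T_ge_1.
  apply exp_lt_inv; rewrite exp_0; nra.
Qed.

Lemma INR_le_alpha_mul_pow (k : nat) : INR k <= alpha * exp nu ^ k.
Proof.
  pose proof INR_T_ge_1.
  assert (Hpeak := INR_mul_pow_le_peak (exp nu) T exp_nu_lower
                     (Rlt_le _ _ exp_nu_upper) k).
  rewrite exp_nu_pow_T in Hpeak.
  apply (Rmult_le_reg_l (INR T)); [lra|].
  replace (INR T * INR k) with (INR k * (INR T / alpha) * alpha) by (field; lra).
  replace (INR T * (alpha * exp nu ^ k)) with (INR T * exp nu ^ k * alpha) by ring.
  apply Rmult_le_compat_r; lra.
Qed.

Lemma one_add_div_T_le_pow (k : nat) : 1 + INR k / INR T <= exp nu ^ k.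
Proof.
  pose proof exp_nu_lower; pose proof INR_T_ge_1.
  apply Rle_trans with ((1 + / INR T) ^ k).
  - apply poly, Rinv_0_lt_compat; lra.
  - apply pow_incr; split.
    + assert (0 < / INR T) by (apply Rinv_0_lt_compat; lra); lra.
    + apply (Rmult_le_reg_l (INR T)); [lra|].
      replace (INR T * (1 + / INR T)) with (INR T + 1) by (field; lra); lra.
Qed.

Lemma exp_nu_add (m : R) (k : nat) :
  exp (nu * (m + INR k)) = exp (nu * m) * exp nu ^ k.
Proof. rewrite <- exp_mult_INR, <- exp_plus; f_equal; ring. Qed.

Lemma exp_nu_growth (m : R) (k : nat) :
  exp (nu * m) + INR k / alpha * exp (nu * (m - INR T))
    <= exp (nu * (m + INR k)).
Proof.
  pose proof INR_T_ge_1.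
  assert (Hshift : exp (nu * (m - INR T)) = exp (nu * m) * (alpha / INR T)).
  { replace (nu * (m - INR T)) with (nu * m + - (INR T * nu)) by ring.
    rewrite exp_plus, exp_Ropp, exp_mult_INR, exp_nu_pow_T.
    field; lra. }
  rewrite Hshift, exp_nu_add.
  replace (exp (nu * m) + INR k / alpha * (exp (nu * m) * (alpha / INR T)))
    with (exp (nu * m) * (1 + INR k / INR T)) by (field; lra).
  apply Rmult_le_compat_l; [apply Rlt_le, exp_pos | apply one_add_div_T_le_pow].
Qed.

Lemma exp_nu_shifted_growth (delta Delta m x : R) (k : nat) :
  0 <= delta < 1 -> Delta <= (1 - delta) / nu -> x <= m ->
  exp (nu * m) - exp (nu * (x - Delta)) + delta * (INR k / alpha) * exp (nu * x)
    <= exp (nu * (m + INR k)).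
Proof.
  intros Hdelta HDelta Hxm.
  pose proof nu_pos.
  assert (Hdecay : delta <= exp (- (nu * Delta))).
  { apply (Rmult_le_compat_l nu) in HDelta; [|lra].
    replace (nu * ((1 - delta) / nu)) with (1 - delta) in HDelta by (field; lra).
    pose proof (exp_ineq1_le (- (nu * Delta))); lra. }
  replace (nu * (x - Delta)) with (nu * x + - (nu * Delta)) by ring.
  rewrite exp_plus, exp_nu_add.
  apply sub_add_le_mul.
  - split; [apply Rlt_le, exp_pos|].
    destruct (Rle_lt_or_eq_dec _ _ Hxm) as [Hlt | ->]; [|lra].
    apply Rlt_le, exp_increasing, Rmult_lt_compat_l; lra.
  - lra.
  - lra.
  - apply pow_R1_Rle; pose proof exp_nu_lower; pose proof INR_T_ge_1; nra.
  - pose proof (INR_le_alpha_mul_pow k).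
    apply (Rmult_le_reg_l alpha); [lra|].
    replace (alpha * (INR k / alpha)) with (INR k) by (field; lra); lra.
Qed.

End TOfAlpha.

Theorem lemma11 (alpha' : R) (T : nat) (delta Delta : R) :
  0 < alpha' -> is_T alpha' T ->
  0 < delta < 1 ->
  0 < Delta -> Delta <= (1 - delta) / nu_of alpha' T ->
  forall (t m : Z) (x : R),
    INR T <= x -> x <= IZR m -> (m < t)%Z ->
    exp (nu_of alpha' T * IZR m)
      + (IZR t - IZR m) / alpha' * exp (nu_of alpha' T * (IZR m - INR T))
      <= exp (nu_of alpha' T * IZR t)
    /\
    exp (nu_of alpha' T * IZR m) - exp (nu_of alpha' T * (x - Delta))
      + delta * ((IZR t - IZR m) / alpha') * exp (nu_of alpha' T * x)
      <= exp (nu_of alpha' T * IZR t).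
Proof.
  intros Halpha HT Hdelta _ HDelta t m x _ Hxm Hmt.
  assert (Hgap : IZR t = IZR m + INR (Z.to_nat (t - m))).
  { rewrite INR_IZR_INZ, Z2Nat.id by lia; rewrite <- plus_IZR; f_equal; lia. }
  replace (IZR t - IZR m) with (INR (Z.to_nat (t - m))) by lra.
  rewrite Hgap; split.
  - exact (exp_nu_growth alpha' T Halpha HT _ _).
  - apply (exp_nu_shifted_growth alpha' T Halpha HT); [lra | exact HDelta | exact Hxm].
Qed.
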